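(* Let $\varphi:[0,\infty)\to(0,\infty)$ be continuous, strictly increasing, with $\varphi(x)\to\infty$ as $x\to\infty$, and rapidly growing: there exist $\varepsilon>0$ and $A>0$ such that $\varphi(x)/x^{1+\varepsilon}$ is increasing on $[A,\infty)$. Let $W(x)=\exp(\varphi(|x|))$ and $A_n=\varphi^{-1}(n)$. Then for all sufficiently large $n\in\mathbb N$, $$\sup_{x\ge A_n}\frac{|T_n(x/A_n)|}{W(x)}\le\frac{2^n}{e^n},$$ where $T_n$ is the Tchebyshev polynomial of the first kind of degree $n$.
   Context: $T_n(x)=\frac12\left((x+\sqrt{x^2-1})^n+(x-\sqrt{x^2-1})^n\right)$. *)

From HB Require Import structures.
From mathcomp Require Import all_boot all_order all_algebra.
From mathcomp Require Import all_classical all_reals all_analysis.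
Set Implicit Arguments. Unset Strict Implicit. Unset Printing Implicit Defensive.
Import Order.TTheory GRing.Theory Num.Theory.
Local Open Scope ring_scope.

(* Tchebyshev polynomial of the first kind, via the formula of the paper:
   T_n(x) = 1/2 ((x + sqrt(x^2-1))^n + (x - sqrt(x^2-1))^n),
   used here only for x >= 1 (where it is real and equals the usual T_n). *)
Definition chebT {R : realType} (n : nat) (x : R) : R :=
  2^-1 * ((x + Num.sqrt (x ^+ 2 - 1)) ^+ n + (x - Num.sqrt (x ^+ 2 - 1)) ^+ n).

From HB Require Import structures.
From mathcomp Require Import all_boot all_order all_algebra.
From mathcomp Require Import all_classical all_reals all_analysis.
From mathcomp Require Import lra.
Set Implicit Arguments. Unset Strict Implicit. Unset Printing Implicit Defensive.
Import Order.TTheory GRing.Theory Num.Theory.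
Import numFieldNormedType.Exports.
Local Open Scope ring_scope.
Local Open Scope classical_set_scope.

(* Put t = x / A_n >= 1. Both roots t +- sqrt(t^2 - 1) lie in [0, 2t], so
   |T_n(t)| <= (2t)^n <= 2^n e^(n(t-1)).  Since phi(x)/x^(1+eps) increases
   beyond A, so does phi(x)/x, and once A_n > A this gives
   phi(x) >= phi(A_n) x / A_n = n t.  Hence
   |T_n(t)| / e^(phi x) <= 2^n e^(n t - n - phi x) <= 2^n / e^n. *)

Lemma chebT_le_pow (R : realType) (n : nat) (t : R) :
  1 <= t -> `|chebT n t| <= (2 * t) ^+ n.
Proof.
move=> t_ge1; rewrite /chebT; set s := Num.sqrt (t ^+ 2 - 1).
have s_ge0 : 0 <= s by apply: sqrtr_ge0.
have s_sqr : s ^+ 2 = t ^+ 2 - 1.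
  by rewrite sqr_sqrtr // subr_ge0 expr_ge1 // (le_trans ler01).
have s_le_t : s <= t by nra.
have root_le (r : R) : 0 <= r <= 2 * t -> r ^+ n <= (2 * t) ^+ n.
  by case/andP=> r_ge0 r_le; rewrite lerXn2r // nnegrE (le_trans r_ge0).
have plus_le : (t + s) ^+ n <= (2 * t) ^+ n by apply: root_le; apply/andP; lra.
have minus_le : (t - s) ^+ n <= (2 * t) ^+ n by apply: root_le; apply/andP; lra.
have roots_ge0 : 0 <= (t + s) ^+ n + (t - s) ^+ n.
  by rewrite addr_ge0 // exprn_ge0 //; lra.
rewrite ger0_norm ?mulr_ge0 ?invr_ge0 //; lra.
Qed.

Lemma exprn_le_expR (R : realType) (n : nat) (t : R) :
  0 <= t -> t ^+ n <= expR (n%:R * (t - 1)).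
Proof.
move=> t_ge0; rewrite expRM_natl lerXn2r ?nnegrE ?expR_ge0 //.
by have := expR_ge1Dx (t - 1); lra.
Qed.

Section RapidGrowth.
Context {R : realType} {phi : R -> R} {eps A : R}.
Hypotheses (eps_ge0 : 0 <= eps) (A_gt0 : 0 < A).
Hypothesis phi_ge0 : forall x, A <= x -> 0 <= phi x.
Hypothesis ratio_increasing : forall x y, A <= x -> x <= y ->
  phi x / x `^ (1 + eps) <= phi y / y `^ (1 + eps).

Let powR1D (x : R) : 0 < x -> x `^ (1 + eps) = x * x `^ eps.
Proof.
by move=> x_gt0; rewrite powRD ?powRr1 ?(ltW x_gt0) // (gt_eqF x_gt0) implybT.
Qed.

Lemma ratio_id_increasing a x : A <= a -> a <= x -> phi a / a <= phi x / x.
Proof.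
move=> A_le_a a_le_x.
have a_gt0 : 0 < a by apply: lt_le_trans A_le_a.
have x_gt0 : 0 < x by apply: lt_le_trans a_le_x.
have pow_le : a `^ eps <= x `^ eps.
  by rewrite ge0_ler_powR // nnegrE ltW.
have split_ratio (y : R) : 0 < y ->
    phi y / y = phi y / y `^ (1 + eps) * y `^ eps.
  by move=> y_gt0; rewrite powR1D // invfM mulrA divfK // gt_eqF ?powR_gt0.
rewrite split_ratio // [leRHS]split_ratio //.
by apply: ler_pM; rewrite ?divr_ge0 ?phi_ge0 ?powR_ge0 ?ratio_increasing.
Qed.

End RapidGrowth.

Theorem lemma2 (R : realType) (phi : R -> R) :
  {within [set x : R | 0 <= x], continuous phi} ->
  (forall x : R, 0 <= x -> 0 < phi x) ->
  (forall x y : R, 0 <= x -> x < y -> phi x < phi y) ->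
  phi x @[x --> +oo] --> +oo ->
  (exists eps : R, 0 < eps /\ exists A : R, 0 < A /\
     forall x y : R, A <= x -> x <= y ->
       phi x / x `^ (1 + eps) <= phi y / y `^ (1 + eps)) ->
  exists N : nat, forall n : nat, (N <= n)%N ->
    forall An : R, 0 <= An -> phi An = n%:R ->
      forall x : R, An <= x ->
        `|chebT n (x / An)| / expR (phi `|x|) <= 2 ^+ n / expR n%:R.
Proof.
move=> _ phi_gt0 phi_incr _ [eps [eps_gt0 [A [A_gt0 ratio_incr]]]].
exists (Num.truncn (phi A)).+1 => n N_le_n An An_ge0 phi_An x An_le_x.
have phiA_lt_n : phi A < n%:R.
  by apply: lt_le_trans (truncnS_gt _) _; rewrite ler_nat.
have A_lt_An : A < An.
  have phi_mono : {in Num.nneg &, {mono phi : u v / u <= v}}.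
    by apply: le_mono_in => u v u_ge0 _; apply: phi_incr.
  by rewrite ltNge -phi_mono ?nnegrE ?(ltW A_gt0) // -ltNge phi_An.
have An_gt0 : 0 < An by apply: lt_trans A_lt_An.
have x_gt0 : 0 < x by apply: lt_le_trans An_le_x.
rewrite (gtr0_norm x_gt0); set t := x / An.
have t_ge1 : 1 <= t by rewrite ler_pdivlMr // mul1r.
have nt_le_phix : n%:R * t <= phi x.
  have phi_ge0 y : A <= y -> 0 <= phi y.
    by move=> A_le_y; rewrite ltW // phi_gt0 // (le_trans (ltW A_gt0)).
  have := ratio_id_increasing (ltW eps_gt0) A_gt0 phi_ge0 ratio_incr
    (ltW A_lt_An) An_le_x.
  by rewrite phi_An ler_pdivlMr // mulrAC -mulrA.
rewrite ler_pdivrMr ?expR_gt0 // mulrAC -mulrA -expRB.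
apply: le_trans (chebT_le_pow n t_ge1) _.
rewrite exprMn ler_wpM2l ?exprn_ge0 //.
apply: le_trans (exprn_le_expR n (le_trans ler01 t_ge1)) _.
by rewrite ler_expR; lra.
Qed.
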